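(* Let $R\ge1$ and let $\mathbb{G}_1,\dots,\mathbb{G}_R$ be linear arrays whose difference coarrays $\mathbb{D}_{\mathbb{G}_1},\dots,\mathbb{D}_{\mathbb{G}_R}$ are all hole-free. Let $\mathbb{M}_r$ ($0\le r\le R$) be the multi-generator fractal array built from them. Then for every $1\le r\le R$ the difference coarray $\mathbb{D}_r$ of $\mathbb{M}_r$ is hole-free and $$\mathbb{D}_r=\left[-\tfrac{P_r-1}{2},\tfrac{P_r-1}{2}\right]\cap\mathbb{Z},\qquad P_r=\prod_{i=1}^r|\mathbb{D}_{\mathbb{G}_i}|.$$
   Context: A linear array is a finite set $\mathbb{G}\subset\mathbb{Z}$ with $\min\mathbb{G}=0$; its difference coarray is $\mathbb{D}=\{n_1-n_2:n_1,n_2\in\mathbb{G}\}$; its central ULA is the largest set $\{-m,\dots,m\}$ ($m\ge0$) contained in $\mathbb{D}$; $\mathbb{D}$ is hole-free if it equals its central ULA. Given generators $\mathbb{G}_1,\dots,\mathbb{G}_R$ with central ULAs $\mathbb{U}_{\mathbb{G}_i}$, the multi-generator fractal array is defined by $\mathbb{M}_0=\{0\}$ and $\mathbb{M}_{r+1}=\bigcup_{n\in\mathbb{G}_{r+1}}\big(\mathbb{M}_r+n\prod_{i=1}^{r}|\mathbb{U}_{\mathbb{G}_i}|\big)$ for $0\le r\le R-1$ (empty product $=1$), where $A+t=\{a+t:a\in A\}$. *)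

(* Linear arrays are finite sets of integers, represented
   as sequences (duplicates are irrelevant: only membership matters). *)
From mathcomp Require Import all_boot all_order all_algebra.
Set Implicit Arguments. Unset Strict Implicit. Unset Printing Implicit Defensive.
Import Order.TTheory GRing.Theory Num.Theory.

Definition linear_array (G : seq int) : Prop :=
  (0%R \in G) /\ all (fun x : int => (0 <= x)%R) G.

Definition diffs (G : seq int) : seq int := [seq (a - b)%R | a <- G, b <- G].

Definition dbound (G : seq int) : nat := \max_(d <- diffs G) `|d|%N.

Definition ula_ok (G : seq int) (m : nat) : bool :=
  all (fun k : nat => (Posz k \in diffs G) && ((- Posz k)%R \in diffs G)) (iota 0 m.+1).

(* radius m of the central ULA: the largest m >= 0 with {-m..m} in D
   (no m larger than dbound G can qualify) *)
Definition ula_rad (G : seq int) : nat :=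
  \max_(m < (dbound G).+1 | ula_ok G m) (m : nat).

Definition ula_size (G : seq int) : nat := (ula_rad G).*2.+1.

Definition hole_free (G : seq int) : Prop :=
  forall d : int, d \in diffs G <-> (`|d| <= ula_rad G)%N.

Definition coarray_size (G : seq int) : nat := size (undup (diffs G)).

Definition ula_prod (Gs : nat -> seq int) (r : nat) : nat :=
  \prod_(1 <= i < r.+1) ula_size (Gs i).

(* multi-generator fractal array; generators indexed 1..R *)
Fixpoint fractal (Gs : nat -> seq int) (r : nat) : seq int :=
  match r with
  | 0 => [:: 0%R]
  | r'.+1 => flatten [seq [seq (a + n * Posz (ula_prod Gs r'))%R | a <- fractal Gs r']
                     | n <- Gs r'.+1]
  end.

(* If the coarray of A is [-k, k] and that of B is [-m, m],
   then the array A + (2k+1) B has coarray [-(k + (2k+1) m), k + (2k+1) m]: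
   its differences are (a1 - a2) + (2k+1) (b1 - b2), and every integer in
   that range has such a balanced mixed-radix expansion.  Since the scale
   |U_1| ... |U_r| of the fractal construction is 2k+1 for the radius k of
   the coarray of M_r, the radius grows exactly as the product of the sizes
   2m+1 of the generators' coarrays. *)
From mathcomp Require Import all_boot all_order all_algebra.
From mathcomp Require Import zify ring.
Import Order.TTheory GRing.Theory Num.Theory.

Set Implicit Arguments.
Unset Strict Implicit.

Lemma diffsP (G : seq int) (d : int) :
  d \in diffs G <-> exists a b, [/\ a \in G, b \in G & d = (a - b)%R].
Proof.
split; first by move=> /allpairsP [[a b] /= [Ha Hb ->]]; exists a, b.
by move=> [a [b [Ha Hb ->]]]; apply/allpairsP; exists (a, b).
Qed.

Section CentredCoarray.

Variables (G : seq int) (h : nat).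
Hypothesis diffs_centred : forall d : int, d \in diffs G <-> (`|d| <= h)%N.

Lemma dbound_centred : dbound G = h.
Proof.
apply/eqP; rewrite eqn_leq; apply/andP; split.
  by apply/bigmax_leqP_seq => d /diffs_centred.
have hG : Posz h \in diffs G by apply/diffs_centred.
exact: (@leq_bigmax_seq _ _ xpredT (fun d : int => `|d|%N) _ hG).
Qed.

Lemma ula_ok_centred (m : nat) : ula_ok G m = (m <= h)%N.
Proof.
apply/idP/idP.
  move=> /allP /(_ m); rewrite mem_iota add0n ltnSn => /(_ isT).
  by move=> /andP [/diffs_centred].
move=> le_mh; apply/allP => k; rewrite mem_iota add0n => lt_km.
by apply/andP; split; apply/diffs_centred; lia.
Qed.

Lemma ula_rad_centred : ula_rad G = h.
Proof.
rewrite /ula_rad dbound_centred; apply/eqP; rewrite eqn_leq; apply/andP; split.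
  by apply/bigmax_leqP => i _; rewrite -ltnS.
have := @leq_bigmax_cond _ (fun m : 'I_h.+1 => ula_ok G m) val ord_max.
by rewrite /= ula_ok_centred leqnn => /(_ isT).
Qed.

Lemma coarray_size_centred : coarray_size G = h.*2.+1.
Proof.
have perm_diffs :
    perm_eq (undup (diffs G)) [seq (Posz i - Posz h)%R | i <- iota 0 h.*2.+1].
  apply: uniq_perm; first exact: undup_uniq.
    by rewrite map_inj_uniq ?iota_uniq // => i j /=; lia.
  move=> x; rewrite mem_undup; apply/idP/idP.
    move=> /diffs_centred le_xh; apply/mapP; exists (absz (x + Posz h)%R); last lia.
    by rewrite mem_iota; lia.
  by move=> /mapP [i]; rewrite mem_iota => lt_i ->; apply/diffs_centred; lia.
by rewrite /coarray_size (perm_size perm_diffs) size_map size_iota.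
Qed.

End CentredCoarray.

Lemma coarray_size_hole_free (G : seq int) :
  hole_free G -> coarray_size G = ula_size G.
Proof. exact: coarray_size_centred. Qed.

Lemma balanced_digits (d : int) (k m : nat) :
  (`|d| <= k + m * k.*2.+1)%N ->
  exists e c : int,
    [/\ (`|e| <= m)%N, (`|c| <= k)%N & d = (e * Posz k.*2.+1 + c)%R].
Proof.
(* Euclidean division of d + k by 2k+1 puts the remainder shifted by -k in [-k, k]. *)
move=> le_d; set P := Posz k.*2.+1.
have P_neq0 : P != 0%R by [].
have eq_div := divz_eq (d + Posz k) P.
have ge0_mod := modz_ge0 (d + Posz k) P_neq0.
have lt_mod := ltz_pmod (d + Posz k) (isT : (0 < P)%R).
exists (divz (d + Posz k) P), (modz (d + Posz k) P - Posz k)%R.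
split; rewrite /P in eq_div lt_mod *.
- by nia.
- by lia.
- by lia.
Qed.

Definition dilated_sum (A B : seq int) (p : nat) : seq int :=
  flatten [seq [seq (a + n * Posz p)%R | a <- A] | n <- B].

Lemma mem_dilated_sum (A B : seq int) (p : nat) (x : int) :
  x \in dilated_sum A B p <->
  exists a n, [/\ a \in A, n \in B & x = (a + n * Posz p)%R].
Proof.
split; first by move=> /flatten_mapP [n Bn /mapP [a Aa ->]]; exists a, n.
by move=> [a [n [Aa Bn ->]]]; apply/flatten_mapP; exists n => //; apply/mapP; exists a.
Qed.

Lemma diffs_dilated_sum (A B : seq int) (k m : nat) :
  (forall d : int, d \in diffs A <-> (`|d| <= k)%N) ->
  (forall d : int, d \in diffs B <-> (`|d| <= m)%N) ->
  forall d : int,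
    d \in diffs (dilated_sum A B k.*2.+1) <-> (`|d| <= k + m * k.*2.+1)%N.
Proof.
move=> diffsA diffsB d; split.
  move=> /diffsP [x [y [/mem_dilated_sum [a1 [n1 [A1 B1 ->]]]
                        /mem_dilated_sum [a2 [n2 [A2 B2 ->]]] ->]]].
  have le_a : (`|a1 - a2| <= k)%N by apply/diffsA/diffsP; exists a1, a2.
  have le_n : (`|n1 - n2| <= m)%N by apply/diffsB/diffsP; exists n1, n2.
  by nia.
move=> /balanced_digits [e [c [/diffsB /diffsP [n1 [n2 [B1 B2 ->]]]
                               /diffsA /diffsP [a1 [a2 [A1 A2 ->]]] ->]]].
apply/diffsP; exists (a1 + n1 * Posz k.*2.+1)%R, (a2 + n2 * Posz k.*2.+1)%R.
split; last by ring.
  by apply/mem_dilated_sum; exists a1, n1.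
by apply/mem_dilated_sum; exists a2, n2.
Qed.

Lemma fractalS (Gs : nat -> seq int) (r : nat) :
  fractal Gs r.+1 = dilated_sum (fractal Gs r) (Gs r.+1) (ula_prod Gs r).
Proof. by []. Qed.

Lemma ula_prodS (Gs : nat -> seq int) (r : nat) :
  ula_prod Gs r.+1 = ula_prod Gs r * ula_size (Gs r.+1).
Proof. by rewrite /ula_prod big_nat_recr. Qed.

Lemma odd_mul_double (k m : nat) : k.*2.+1 * m.*2.+1 = (k + m * k.*2.+1).*2.+1.
Proof. by rewrite -!muln2; lia. Qed.

Lemma ula_prod_odd (Gs : nat -> seq int) (r : nat) :
  ula_prod Gs r = ((ula_prod Gs r).-1./2).*2.+1.
Proof.
elim: r => [|r IH]; first by rewrite /ula_prod big_geq.
by rewrite ula_prodS IH /ula_size odd_mul_double /= doubleK.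
Qed.

Lemma diffs_fractal (R : nat) (Gs : nat -> seq int) :
  (forall i, (1 <= i <= R)%N -> hole_free (Gs i)) ->
  forall r, (r <= R)%N -> forall d : int,
    d \in diffs (fractal Gs r) <-> (`|d| <= (ula_prod Gs r).-1./2)%N.
Proof.
move=> hfGs; elim=> [|r IH] le_rR d.
  rewrite /ula_prod big_geq //= /diffs /= inE.
  by split=> [/eqP -> | ?]; [|apply/eqP]; lia.
rewrite fractalS ula_prodS /ula_size ula_prod_odd odd_mul_double /= doubleK.
exact: diffs_dilated_sum (IH (ltnW le_rR)) (hfGs r.+1 le_rR) d.
Qed.

Theorem theorem8 (R : nat) (Gs : nat -> seq int) :
  (1 <= R)%N ->
  (forall i, (1 <= i <= R)%N -> linear_array (Gs i)) ->
  (forall i, (1 <= i <= R)%N -> hole_free (Gs i)) ->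
  forall r, (1 <= r <= R)%N ->
    hole_free (fractal Gs r) /\
    (forall d : int, d \in diffs (fractal Gs r) <->
       (- (((\prod_(1 <= i < r.+1) coarray_size (Gs i)) - 1)./2)%:Z <= d <=
          (((\prod_(1 <= i < r.+1) coarray_size (Gs i)) - 1)./2)%:Z)%R).
Proof.
move=> _ _ hfGs r /andP [_ le_rR].
have diffsM := diffs_fractal hfGs le_rR.
have -> : \prod_(1 <= i < r.+1) coarray_size (Gs i) = ula_prod Gs r.
  by apply: eq_big_nat => i le_i; apply/coarray_size_hole_free/hfGs; lia.
rewrite subn1; split.
  by move=> d; rewrite (ula_rad_centred diffsM); exact: diffsM.
by move=> d; rewrite diffsM; split; lia.
Qed.
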